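(* Fix $0<\tau\le1$, $m>0$ and $\alpha=\frac{\tau}{2\tau+2m}$. There exist $S=S(\alpha)\ge2$ (depending also on $d$) and $\delta_0>0$ such that for every $\delta\in(0,\delta_0)$, with the integer $r$ determined by $2^{-r}\le\delta^S<2^{-r+1}$, the following holds: for every $\omega_1\in\Omega$ and every fixed cube $Q\in\mathcal{D}_1=\mathcal{D}(\omega_1)$, $$\mathbb{P}_{\omega_2}\{Q\text{ is bad}\}\le\delta^2,$$ and symmetrically $\mathbb{P}_{\omega_1}\{R\text{ is bad}\}\le\delta^2$ for every fixed $R\in\mathcal{D}_2=\mathcal{D}(\omega_2)$.
   Context: Fix a unit cube $Q_*\subset\mathbb{R}^d$. $\Omega=(-1/40,1/40]^d$ with normalized Lebesgue measure $\mathbb{P}$. For $\omega\in\Omega$, $\mathcal{D}(\omega)$ is the collection of all dyadic subcubes of $\omega+Q_*$ (obtained by repeated subdivision into $2^d$ children). $\omega_1,\omega_2\in\Omega$ are independent. The skeleton of a cube $R$ is $sk\,R=\bigcup_{i=1}^{2^d}\partial R_i$, $R_i$ the dyadic children of $R$; $\ell(\cdot)$ is side length. A cube $Q\in\mathcal{D}_1$ is bad if there is $R\in\mathcal{D}_2$ with $\ell(R)\ge2^r\ell(Q)$ and $\operatorname{dist}(Q,sk\,R)<\ell(Q)^\alpha\ell(R)^{1-\alpha}$; badness of $R\in\mathcal{D}_2$ is defined symmetrically with respect to $\mathcal{D}_1$. *)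

From HB Require Import structures.
From mathcomp Require Import all_boot all_order all_algebra.
From mathcomp Require Import all_classical all_reals all_analysis.
Set Implicit Arguments. Unset Strict Implicit. Unset Printing Implicit Defensive.
Import Order.TTheory GRing.Theory Num.Theory.
Local Open Scope classical_set_scope.
Local Open Scope ring_scope.

Section Defs.
Variables (R : realType) (d : nat).

Definition pt := 'I_d -> R.

Definition edist (x y : pt) : R := Num.sqrt (\sum_(i < d) (x i - y i) ^+ 2).

Definition set_dist (A B : set pt) : R :=
  inf [set e | exists x y, A x /\ B y /\ e = edist x y].

Definition cube (c : pt) (l : R) : set pt :=
  [set x | forall i, c i <= x i <= c i + l].

Definition cube_boundary (c : pt) (l : R) : set pt :=
  [set x | cube c l x /\ exists i, x i = c i \/ x i = c i + l].

Definition child_corner (c : pt) (l : R) (eps : 'I_d -> bool) : pt :=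
  fun i => c i + (eps i)%:R * (l / 2).

Definition skeleton (c : pt) (l : R) : set pt :=
  [set x | exists eps : 'I_d -> bool, cube_boundary (child_corner c l eps) (l / 2) x].

(* (c, l) is a cube of the dyadic system D(omega) obtained from omega + Q_*,
   where Q_* is the unit cube with lower corner q *)
Definition dyadic (q omega : pt) (c : pt) (l : R) : Prop :=
  exists (k : nat) (j : 'I_d -> nat),
    (forall i, (j i < 2 ^ k)%N) /\ l = (2 ^+ k)^-1 /\
    forall i, c i = q i + omega i + (j i)%:R * (2 ^+ k)^-1.

Definition bad (q omega : pt) (r : int) (alpha : R) (c : pt) (l : R) : Prop :=
  exists (c' : pt) (l' : R), dyadic q omega c' l' /\
    (2 : R) `^ (r%:~R) * l <= l' /\
    set_dist (cube c l) (skeleton c' l') < l `^ alpha * l' `^ (1 - alpha).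

Definition Omega : set pt := [set w | forall i, - (40%:R)^-1 < w i <= (40%:R)^-1].

Definition box (a b : pt) : set pt := [set x | forall i, a i <= x i <= b i].
Definition box_vol (a b : pt) : R := \prod_(i < d) Num.max (b i - a i) 0.

Definition lebesgue_outer (A : set pt) : \bar R :=
  ereal_inf [set s | exists (a b : nat -> pt),
     A `<=` \bigcup_k box (a k) (b k) /\
     s = (\sum_(0 <= k <oo) (box_vol (a k) (b k))%:E)%E].

(* normalized Lebesgue measure on Omega (|Omega| = 20^-d) *)
Definition Prob (A : set pt) : \bar R :=
  (((20%:R : R) ^+ d)%:E * lebesgue_outer (A `&` Omega))%E.

End Defs.

(* Let Q have side 2^-k and let R in D(w), of side 2^-k' with k' <= k - r, witness
   that Q is bad.  The faces orthogonal to e_j of the children of R lie on the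
   hyperplanes x_j = q_j + w_j + N 2^(-k'-1), 0 <= N <= 2^(k'+1), so
   dist(Q, sk R) < l(Q)^a l(R)^(1-a) confines w_j to one of 2^(k'+1) + 1 slabs of
   width l(Q) + 2 l(Q)^a l(R)^(1-a).  For i = k - k' these slabs have normalized
   measure at most 180 * 2^(-a i) in total; summing over j and i >= r bounds the
   probability by 180 d 2^(-a r) / (1 - 2^(-a)) <= C delta^(a S), and S = 3/a makes
   this at most delta^2 for small delta.  Nothing about the fixed grid is used, which
   gives both halves of the statement at once. *)

From Pilot Require Import Defs.
From HB Require Import structures.
From mathcomp Require Import all_boot all_order all_algebra.
From mathcomp Require Import all_classical all_reals all_analysis.
From mathcomp Require Import ring lra zify.
Set Implicit Arguments. Unset Strict Implicit. Unset Printing Implicit Defensive.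
Import Order.TTheory GRing.Theory Num.Theory.
Local Open Scope classical_set_scope.
Local Open Scope ring_scope.

Section PowersOfTwo.
Variable R : realType.

Lemma inv_expr2E (n : nat) : ((2:R) ^+ n)^-1 = 2 `^ (- n%:R).
Proof. by rewrite powRN powR_mulrn. Qed.

Lemma powR2D (x y : R) : 2 `^ x * 2 `^ y = 2 `^ (x + y).
Proof. by rewrite powRD // pnatr_eq0 implybT. Qed.

Lemma powR2_neg_bounds {alpha : R} : 0 < alpha -> 0 < (2:R) `^ (- alpha) < 1.
Proof.
move=> alpha_gt0; rewrite powR_gt0 //= powRN invf_lt1 ?powR_gt0 //.
have := gt0_ltr_powR alpha_gt0 (x := 1) (y := 2); rewrite powR1.
by apply; rewrite ?nnegrE ?ler01 ?ler0n ?ltr1n.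
Qed.

Lemma powR_lt1 (x p : R) : 0 <= x < 1 -> 0 < p -> x `^ p < 1.
Proof.
move=> /andP[x_ge0 x_lt1] p_gt0; have := gt0_ltr_powR p_gt0 (x := x) (y := 1).
by rewrite powR1; apply; rewrite ?nnegrE ?ler01.
Qed.

Lemma nat_of_powR2_le_lt1 (r : int) (x : R) :
  x < 1 -> (2:R) `^ (- r%:~R) <= x -> exists n : nat, r = n.
Proof.
case: r => [n|n] x_lt1; first by exists n.
rewrite NegzE mulrNz opprK powR_mulrn // => le_x.
have : (1:R) <= 2 ^+ n.+1 by rewrite exprn_ege1 // ler1n.
lra.
Qed.

Lemma powR2_neg_exp_le (alpha x : R) (n : nat) : 0 < alpha -> 0 <= x ->
  (2:R) `^ (- n%:R) <= x `^ (3 / alpha) -> ((2:R) `^ (- alpha)) ^+ n <= x ^+ 3.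
Proof.
move=> alpha_gt0 x_ge0 le_x.
rewrite -powR_mulrn ?powR_ge0 // -powRrM mulrC mulrN -mulNr powRrM.
rewrite -(powR_mulrn 3 x_ge0) -[3%:R](mulfVK (lt0r_neq0 alpha_gt0)) powRrM.
by rewrite ge0_ler_powR ?nnegrE ?powR_ge0 // ltW.
Qed.

Lemma geometric_sum_le (rho : R) (m n : nat) : 0 < rho < 1 ->
  \sum_(m <= i < n) rho ^+ i <= rho ^+ m / (1 - rho).
Proof.
move=> /andP[rho_gt0 rho_lt1]; have [le_nm|lt_mn] := leqP n m.
  by rewrite big_geq // divr_ge0 ?exprn_ge0 ?subr_ge0 ?ltW.
rewrite -(subnKC (ltnW lt_mn)) geometric_partial_tail.
by rewrite geometric_le_lim ?exprn_ge0 ?ger0_norm ?ltW.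
Qed.

End PowersOfTwo.

Section BadCubes.
Variables (R : realType) (d : nat).

Lemma coord_le_edist (x y : pt R d) j : `|x j - y j| <= Defs.edist x y.
Proof.
rewrite /Defs.edist -sqrtr_sqr ler_sqrt; last by apply: sumr_ge0 => i _; apply: sqr_ge0.
by rewrite (bigD1 j) //= ler_wpDr //; apply: sumr_ge0 => i _; apply: sqr_ge0.
Qed.

Lemma set_dist_lt {A B : set (pt R d)} {e : R} :
  A !=set0 -> B !=set0 -> set_dist A B < e ->
  exists x y, A x /\ B y /\ Defs.edist x y < e.
Proof.
move=> [x Ax] [y By] /inf_lt[|_ [x' [y' [Ax' [By' ->]]]] lt_e]; last by exists x', y'.
by exists (Defs.edist x y), x, y.
Qed.

Lemma cube_corner (c : pt R d) l : 0 <= l -> cube c l c.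
Proof. by move=> l0 i; rewrite lexx lerDl. Qed.

Lemma skeleton_corner (d_gt0 : (0 < d)%N) (c : pt R d) l : 0 <= l -> skeleton c l c.
Proof.
move=> l0; exists (fun _ => false); rewrite /child_corner.
split; last by exists (Ordinal d_gt0); left; rewrite mul0r addr0.
by move=> i; rewrite mul0r addr0 lexx lerDl divr_ge0.
Qed.

Lemma skeleton_grid {q w c : pt R d} {jv : 'I_d -> nat} {k : nat} {y : pt R d} :
  (forall i, (jv i < 2 ^ k)%N) ->
  (forall i, c i = q i + w i + (jv i)%:R * ((2:R) ^+ k)^-1) ->
  skeleton c ((2:R) ^+ k)^-1 y ->
  exists j N, (N <= 2 ^ k.+1)%N /\
    y j = q j + w j + N%:R * ((2:R) ^+ k.+1)^-1.
Proof.
move=> jv_lt c_def [eps [_ [j y_face]]].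
have pow_gt0 : (0:R) < 2 ^+ k.+1 by rewrite exprn_gt0.
have half : ((2:R) ^+ k)^-1 = 2 * ((2:R) ^+ k.+1)^-1.
  by rewrite exprS invfM mulrA mulfV ?mul1r // pnatr_eq0.
have [b y_j] : exists b : bool,
    y j = q j + w j + (2 * jv j + eps j + b)%N%:R * ((2:R) ^+ k.+1)^-1.
  rewrite /child_corner c_def half in y_face.
  case: y_face => ->; [exists false | exists true];
    rewrite !natrD ?natrM /=; case: (eps j) => /=; field; lra.
exists j, (2 * jv j + eps j + b)%N; split => //.
by have := jv_lt j; have := leq_b1 (eps j); have := leq_b1 b; rewrite expnS; lia.
Qed.

Lemma dyadic_scale_gap (k k' r : nat) :
  (2:R) `^ r%:R * ((2:R) ^+ k)^-1 <= ((2:R) ^+ k')^-1 -> (k' + r <= k)%N.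
Proof.
have pow_gt0 n : (0:R) < 2 ^+ n by rewrite exprn_gt0.
rewrite powR_mulrn // ler_pdivrMr // mulrC ler_pdivlMr //.
by rewrite -(ler_eXn2l (_ : 1 < 2 :> R)) ?ltr1n // exprD mulrC.
Qed.

Definition bad_margin (alpha : R) (k k' : nat) : R :=
  ((2:R) ^+ k)^-1 `^ alpha * ((2:R) ^+ k')^-1 `^ (1 - alpha).

Definition slab_lo (q c : pt R d) j alpha (k k' N : nat) : R :=
  c j - q j - N%:R * ((2:R) ^+ k'.+1)^-1 - bad_margin alpha k k'.

Definition slab_hi (q c : pt R d) j alpha (k k' N : nat) : R :=
  slab_lo q c j alpha k k' N + ((2:R) ^+ k)^-1 + 2 * bad_margin alpha k k'.

Lemma bad_in_slab (d_gt0 : (0 < d)%N) (q w c : pt R d) k r alpha :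
  bad q w (Posz r) alpha c ((2:R) ^+ k)^-1 ->
  exists j k' N, [/\ (k' + r <= k)%N, (N <= 2 ^ k'.+1)%N &
    slab_lo q c j alpha k k' N <= w j <= slab_hi q c j alpha k k' N].
Proof.
move=> [c' [_ [[k' [jv [jv_lt [-> c'_def]]]] [le_scale lt_dist]]]].
have inv_pow_ge0 n : (0:R) <= ((2:R) ^+ n)^-1 by rewrite invr_ge0 exprn_ge0.
have [x [y [Qx [skel_y xy_lt]]]] := set_dist_lt
  (ex_intro _ c (cube_corner c (inv_pow_ge0 k)))
  (ex_intro _ c' (skeleton_corner d_gt0 c' (inv_pow_ge0 k'))) lt_dist.
have [j [N [N_le y_j]]] := skeleton_grid jv_lt c'_def skel_y.
exists j, k', N; split => //; first exact: dyadic_scale_gap.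
have /andP[xj_ge xj_le] := Qx j.
have := le_lt_trans (coord_le_edist x y j) xy_lt.
rewrite ltr_norml y_j /slab_hi /slab_lo /bad_margin => /andP[? ?].
by apply/andP; split; lra.
Qed.

Lemma box_vol_ge0 (a b : pt R d) : 0 <= box_vol a b.
Proof. by apply: prodr_ge0 => i _; rewrite le_max lexx orbT. Qed.

Lemma box_volxx (d_gt0 : (0 < d)%N) (a : pt R d) : box_vol a a = 0.
Proof. by rewrite /box_vol (bigD1 (Ordinal d_gt0)) //= subrr maxxx mul0r. Qed.

Lemma lebesgue_outer_le_boxes (d_gt0 : (0 < d)%N) {s : seq (pt R d * pt R d)}
    {A : set (pt R d)} :
  A `<=` [set x | exists2 p, p \in s & box p.1 p.2 x] ->
  (lebesgue_outer A <= (\sum_(p <- s) box_vol p.1 p.2)%:E)%E.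
Proof.
move=> A_sub; pose p0 : pt R d * pt R d := (fun=> 0, fun=> 0).
pose a n := (nth p0 s n).1; pose b n := (nth p0 s n).2.
apply: ge_ereal_inf; exists (\sum_(0 <= n <oo) (box_vol (a n) (b n))%:E)%E.
  exists a, b; split => // x /A_sub[p p_s box_x].
  by exists (index p s) => //; rewrite /a /b nth_index.
rewrite (nneseries_split 0 (size s)); last by move=> n _; rewrite lee_fin box_vol_ge0.
rewrite eseries0 ?adde0; last by move=> n n_ge _; rewrite /a /b nth_default ?box_volxx.
by rewrite add0n sumEFin (big_nth p0).
Qed.

Definition slab_lower (j : 'I_d) (lo : R) : pt R d :=
  fun i => if i == j then lo else - 40%:R^-1.

Definition slab_upper (j : 'I_d) (hi : R) : pt R d :=
  fun i => if i == j then hi else 40%:R^-1.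

Lemma Omega_in_slab (w : pt R d) j lo hi :
  Omega w -> lo <= w j <= hi -> box (slab_lower j lo) (slab_upper j hi) w.
Proof.
move=> Ow w_j i; rewrite /slab_lower /slab_upper; case: eqP => [->//|_].
by have /andP[/ltW -> ->] := Ow i.
Qed.

Lemma slab_vol (j : 'I_d) (lo hi : R) : lo <= hi ->
  20%:R ^+ d * box_vol (slab_lower j lo) (slab_upper j hi) = 20%:R * (hi - lo).
Proof.
move=> lo_hi; rewrite /box_vol (bigD1 j) //= /slab_lower /slab_upper eqxx.
rewrite max_l ?subr_ge0 // (eq_bigr (fun=> 20%:R^-1)); last first.
  by move=> i /negbTE ->; rewrite max_l; [field | lra].
rewrite prodr_const cardC1 card_ord.
case: d j => [[]//|n j] /=.
by rewrite exprS exprVn; field; rewrite expf_neq0 // pnatr_eq0.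
Qed.

Lemma bad_margin_scaled alpha (k' i : nat) :
  2 ^+ k' * bad_margin alpha (k' + i) k' = ((2:R) `^ (- alpha)) ^+ i.
Proof.
rewrite /bad_margin !inv_expr2E -!powR_mulrn ?powR_ge0 // -!powRrM !powR2D natrD.
by congr (_ `^ _); ring.
Qed.

Lemma slab_family_vol_le alpha (k' i : nat) : 0 < alpha <= 1 ->
  (20%:R * (((2:R) ^+ (k' + i))^-1 + 2 * bad_margin alpha (k' + i) k'))
    *+ (2 ^ k'.+1).+1 <= 180%:R * ((2:R) `^ (- alpha)) ^+ i.
Proof.
move=> /andP[alpha_gt0 alpha_le1].
set P := (2:R) ^+ k'; set l := ((2:R) ^+ (k' + i))^-1.
set e := bad_margin alpha (k' + i) k'.
have P_ge1 : 1 <= P by rewrite exprn_ege1 // ler1n.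
have l_ge0 : 0 <= l by rewrite invr_ge0 exprn_ge0.
have e_ge0 : 0 <= e by rewrite mulr_ge0 ?powR_ge0.
have Pl_le_Pe : P * l <= P * e.
  rewrite /e bad_margin_scaled /P /l exprD invfM mulrA mulfV ?expf_neq0 // mul1r.
  rewrite inv_expr2E -powR_mulrn ?powR_ge0 // -powRrM.
  by rewrite ler_powR ?ler1n // mulNr lerN2 ler_piMl ?ler0n.
have count : ((2 ^ k'.+1).+1)%:R = 2 * P + 1 :> R.
  by rewrite -addn1 natrD natrX exprS.
rewrite -(bad_margin_scaled alpha k' i) -/e -/P -mulr_natr count; nra.
Qed.

(* An index (j, i, N) names a coordinate, a scale gap i = k - k' and a hyperplane. *)
Definition slab_indices (k r : nat) : seq ('I_d * nat * nat) :=
  [seq (j, p.1, p.2) | j <- enum 'I_d,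
     p <- [seq (i, N) | i <- index_iota r k.+1, N <- index_iota 0 (2 ^ (k - i).+1).+1]].

Definition slab_box (q c : pt R d) alpha k (x : 'I_d * nat * nat) :=
  let: (j, i, N) := x in
  (slab_lower j (slab_lo q c j alpha k (k - i) N),
   slab_upper j (slab_hi q c j alpha k (k - i) N)).

Lemma bad_sub_slabs (d_gt0 : (0 < d)%N) (q c : pt R d) k r alpha :
  [set w | bad q w (Posz r) alpha c ((2:R) ^+ k)^-1] `&` @Omega R d `<=`
  [set w | exists2 p, p \in map (slab_box q c alpha k) (slab_indices k r)
                    & box p.1 p.2 w].
Proof.
move=> w [/(bad_in_slab d_gt0)[j [k' [N [le_k N_le w_j]]]] Ow].
have le_k'k : (k' <= k)%N by apply: leq_trans le_k; apply: leq_addr.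
exists (slab_box q c alpha k (j, (k - k')%N, N)); last first.
  by rewrite /slab_box subKn //; apply: Omega_in_slab.
apply/map_f/allpairsP; exists (j, ((k - k')%N, N)); split; rewrite ?mem_enum //.
apply/allpairsPdep; exists (k - k')%N, N; split => //.
  by rewrite mem_index_iota; lia.
by rewrite mem_index_iota subKn.
Qed.

Lemma slab_box_vol (q c : pt R d) alpha k j i N : 0 <= alpha ->
  let p := slab_box q c alpha k (j, i, N) in
  20%:R ^+ d * box_vol p.1 p.2 =
  20%:R * (((2:R) ^+ k)^-1 + 2 * bad_margin alpha k (k - i)).
Proof.
move=> alpha_ge0 /=; have margin_ge0 : 0 <= bad_margin alpha k (k - i).
  by rewrite mulr_ge0 ?powR_ge0.
have inv_ge0 : (0:R) <= ((2:R) ^+ k)^-1 by rewrite invr_ge0 exprn_ge0.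
by rewrite slab_vol /slab_hi; [congr (_ * _); ring | lra].
Qed.

Lemma slabs_vol_le (q c : pt R d) alpha (k r : nat) : 0 < alpha <= 1 ->
  20%:R ^+ d *
    \sum_(p <- map (slab_box q c alpha k) (slab_indices k r)) box_vol p.1 p.2
  <= d%:R * 180%:R * (((2:R) `^ (- alpha)) ^+ r / (1 - (2:R) `^ (- alpha))).
Proof.
move=> alpha01; have /andP[alpha_gt0 _] := alpha01.
set rho := (2:R) `^ (- alpha); have rho01 := powR2_neg_bounds alpha_gt0.
apply: (@le_trans _ _ (\sum_(j <- enum 'I_d) 180%:R * (rho ^+ r / (1 - rho)))); last first.
  rewrite big_const_seq count_predT size_enum_ord iter_addr_0.
  by rewrite -[_ *+ d]mulr_natl mulrA.
rewrite big_map mulr_sumr big_allpairs_dep; apply: ler_sum => j _.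
rewrite big_allpairs_dep /=.
apply: (@le_trans _ _ (\sum_(r <= i < k.+1) 180%:R * rho ^+ i)); last first.
  by rewrite -mulr_sumr ler_wpM2l ?ler0n // geometric_sum_le.
apply: ler_sum_nat => i /andP[_ le_ik].
rewrite (eq_bigr _ (fun N _ => slab_box_vol q c k j i N (ltW alpha_gt0))).
rewrite sumr_const_nat subn0.
have [k' ->] : exists k', k = (k' + i)%N by exists (k - i)%N; rewrite subnK.
by rewrite addnK; apply: slab_family_vol_le.
Qed.

Lemma Prob_bad_le (d_gt0 : (0 < d)%N) (q c : pt R d) alpha (k r : nat) :
  0 < alpha <= 1 ->
  (Prob [set w | bad q w (Posz r) alpha c ((2:R) ^+ k)^-1] <=
   (d%:R * 180%:R * (((2:R) `^ (- alpha)) ^+ r / (1 - (2:R) `^ (- alpha))))%:E)%E.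
Proof.
move=> alpha01.
have cover := lebesgue_outer_le_boxes d_gt0 (bad_sub_slabs d_gt0 (q := q) (c := c) (k := k)
                                                           (r := r) (alpha := alpha)).
apply: le_trans (lee_wpmul2l _ cover) _; first by rewrite lee_fin exprn_ge0 ?ler0n.
by rewrite -EFinM lee_fin slabs_vol_le.
Qed.

End BadCubes.

Theorem theorem15 (R : realType) (d : nat) (q : pt R d) (tau m : R) :
  (0 < d)%N -> 0 < tau <= 1 -> 0 < m ->
  let alpha := tau / (2 * tau + 2 * m) in
  exists S : R, 2 <= S /\
  exists delta0 : R, 0 < delta0 /\
  forall delta : R, 0 < delta < delta0 ->
  forall r : int,
    (2 : R) `^ (- r%:~R) <= delta `^ S < (2 : R) `^ (- r%:~R + 1) ->
    (forall (omega1 : pt R d), Omega omega1 ->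
       forall (c : pt R d) (l : R), dyadic q omega1 c l ->
       (Prob [set omega2 | bad q omega2 r alpha c l] <= (delta ^+ 2)%:E)%E) /\
    (forall (omega2 : pt R d), Omega omega2 ->
       forall (c : pt R d) (l : R), dyadic q omega2 c l ->
       (Prob [set omega1 | bad q omega1 r alpha c l] <= (delta ^+ 2)%:E)%E).
Proof.
move=> d_gt0 /andP[tau_gt0 tau_le1] m_gt0 alpha.
have alpha_gt0 : 0 < alpha by rewrite divr_gt0 //; lra.
have alpha01 : 0 < alpha <= 1 by rewrite alpha_gt0 ler_pdivrMr /=; lra.
have /andP[rho_gt0 rho_lt1] := powR2_neg_bounds alpha_gt0.
set rho := (2:R) `^ (- alpha) in rho_gt0 rho_lt1.
set C := d%:R * 180%:R / (1 - rho).
have C_ge0 : 0 <= C by rewrite divr_ge0 ?mulr_ge0 ?ler0n ?subr_ge0 ?ltW.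
exists (3 / alpha); split; first by rewrite ler_pdivlMr //; lra.
exists (C + 1)^-1; split; first by rewrite invr_gt0; lra.
move=> delta /andP[delta_gt0 delta_lt] r /andP[r_le _].
have deltaC_lt1 : delta * (C + 1) < 1 by rewrite -ltr_pdivlMr ?div1r //; lra.
have delta_lt1 : delta < 1 by nra.
have deltaS_lt1 : delta `^ (3 / alpha) < 1.
  by apply: powR_lt1; [apply/andP; split; lra | rewrite divr_gt0].
have [n r_eq] := nat_of_powR2_le_lt1 deltaS_lt1 r_le; rewrite {}r_eq in r_le *.
have rho_le : rho ^+ n <= delta ^+ 3.
  exact: powR2_neg_exp_le alpha_gt0 (ltW delta_gt0) r_le.
have deltaC_le1 : delta * C <= 1 by move: deltaC_lt1; rewrite mulrDr mulr1; lra.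
have bound : d%:R * 180%:R * (rho ^+ n / (1 - rho)) <= delta ^+ 2.
  rewrite (_ : _ * _ = C * rho ^+ n); last by rewrite /C; field; lra.
  apply: le_trans (ler_wpM2l C_ge0 rho_le) _.
  by rewrite exprSr mulrCA ler_piMr ?exprn_ge0 1?mulrC // ltW.
have Prob_le w c l :
    dyadic q w c l -> (Prob [set w' | bad q w' n alpha c l] <= (delta ^+ 2)%:E)%E.
  move=> [k [_ [_ [-> _]]]].
  by apply: le_trans (Prob_bad_le d_gt0 q c k n alpha01) _; rewrite lee_fin.
by split=> w _ c l /Prob_le.
Qed.
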